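(* Consider the Heartbeat-Bound Hierarchical Credentials (HBHC) protocol with heartbeat interval $\Delta_h>0$, maximum heartbeat age $W_{\max}>0$, and maximum clock skew $\epsilon \ge 0$ between the parent agent and any verifier. Then the zombie window satisfies $W_z \le W_{\max} + \Delta_h + \epsilon$.
   Context: HBHC setting. Agents form a rooted delegation tree. A parent agent $A_p$ holds a heartbeat signing key pair $(hsk_p, hpk_p)$ (ECDSA); a child $A_c$ holds its own identity key pair $(sk_c, pk_c)$ and a credential $cred_c$ containing $pk_c$, an identifier $id_c$, and a binding value $hb\_binding_c = H(hpk_p \| id_c)$, where $H$ is SHA-256. Heartbeat generation: while not revoked, at time $t$ (by the parent's clock) the parent computes $epoch = \lfloor t/\Delta_h\rfloor$, $commitment = H(hpk_p \| epoch)$, $\sigma_h = \mathrm{Sign}(hsk_p, commitment)$, and distributes $(epoch, commitment, \sigma_h, hpk_p)$ every $\Delta_h$ seconds. Authentication: given a verifier challenge $c$ and a heartbeat, the child outputs the proof $(cred_c, epoch, \sigma_h, \sigma_c)$ with $\sigma_c = \mathrm{Sign}(sk_c, c\|epoch\|\sigma_h)$. Verification: a verifier holding a cached $hpk_p$, the challenge $c$, and local clock reading $t$ computes $current\_epoch = \lfloor t/\Delta_h \rfloor$ and accepts iff (i) $current\_epoch - epoch \le W_{\max}/\Delta_h$, (ii) $\sigma_h$ is a valid signature under $hpk_p$ on $H(hpk_p\|epoch)$, (iii) $cred_c.hb\_binding = H(hpk_p \| cred_c.id)$, and (iv) $\sigma_c$ is a valid signature under $cred_c.pk_c$ on $c\|epoch\|\sigma_h$.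 Revocation of $A_p$ at true time $t_r$ means the parent generates no heartbeats after $t_r$. Clock skew: a verifier's local clock reads $t+\delta$ at true time $t$ with $|\delta|\le\epsilon$. Adversary: a computationally bounded Dolev–Yao network adversary who may compromise non-root agents' software but cannot break ECDSA/SHA-256 and cannot extract $hsk_p$ (held in a secure enclave), hence cannot produce valid heartbeat signatures for epochs not signed by the parent. Zombie window: $W_z = \sup\{t - t_r : A_p \text{ revoked at } t_r \text{ and a child } A_c \text{ of } A_p \text{ authenticates successfully (is accepted by a verifier) at time } t\}$. *)

From Stdlib Require Import Reals ZArith Lra.
Open Scope R_scope.

(** Floor of a real number: Stdlib's [Int_part] is the integer floor
    (base_Int_part : IZR (Int_part r) <= r /\ IZR (Int_part r) - r > -1). *)
Definition floorR (x : R) : Z := Int_part x.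

(** Msg   : bit strings; [app] is concatenation [||]; [H] is SHA-256.
    PK/Sig: ECDSA public keys / signatures; [verify pk m s] : ECDSA verification.
    enc*  : canonical encodings of keys, epochs, identifiers and signatures. *)
Record Crypto := {
  Msg : Type;
  PK : Type;
  Sig : Type;
  ID : Type;
  app : Msg -> Msg -> Msg;
  H : Msg -> Msg;
  encPK : PK -> Msg;
  encEpoch : Z -> Msg;
  encID : ID -> Msg;
  encSig : Sig -> Msg;
  verify : PK -> Msg -> Sig -> Prop
}.

Record Cred (C : Crypto) := {
  cred_pk : PK C;
  cred_id : ID C;
  cred_binding : Msg C
}.

Arguments cred_pk {C}. Arguments cred_id {C}. Arguments cred_binding {C}.

Record AuthProof (C : Crypto) := {
  pf_cred : Cred C;
  pf_epoch : Z;
  pf_sigh : Sig C;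
  pf_sigc : Sig C
}.

Arguments pf_cred {C}. Arguments pf_epoch {C}. Arguments pf_sigh {C}. Arguments pf_sigc {C}.

Definition commitment (C : Crypto) (hpk : PK C) (e : Z) : Msg C :=
  H C (app C (encPK C hpk) (encEpoch C e)).

(** Verification: verifier with cached [hpk], challenge [c], local clock
    reading [tloc], heartbeat interval [Dh], maximum heartbeat age [Wmax]. *)
Definition verifier_accepts (C : Crypto) (Dh Wmax : R) (hpk : PK C)
    (c : Msg C) (tloc : R) (p : AuthProof C) : Prop :=
  let current_epoch := floorR (tloc / Dh) in
  let e := pf_epoch p in
  let cr := pf_cred p in
  IZR (current_epoch - e) <= Wmax / Dh /\
  verify C hpk (commitment C hpk e) (pf_sigh p) /\
  cred_binding cr = H C (app C (encPK C hpk) (encID C (cred_id cr))) /\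
  verify C (cred_pk cr)
    (app C (app C c (encEpoch C e)) (encSig C (pf_sigh p))) (pf_sigc p).

(** Epochs for which the parent (clock = true time) produced a heartbeat,
    given that it is revoked at true time [tr]: it generates heartbeats only
    at times t <= tr, for the epoch floor(t / Dh). *)
Definition signed_by_parent (Dh tr : R) (e : Z) : Prop :=
  exists tp, tp <= tr /\ floorR (tp / Dh) = e.

(** Adversary assumption (ECDSA/SHA-256 unbroken, hsk_p in an enclave):
    every valid heartbeat signature under hpk on H(hpk || e) is for an epoch
    actually signed by the parent. *)
Definition no_heartbeat_forgery (C : Crypto) (hpk : PK C) (Dh tr : R) : Prop :=
  forall (e : Z) (s : Sig C),
    verify C hpk (commitment C hpk e) s -> signed_by_parent Dh tr e.

(** The zombie window W_z is the supremum of this set. *)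
Definition zombie_times (C : Crypto) (Dh Wmax eps : R) (hpk : PK C) (tr : R)
    : R -> Prop :=
  fun x => exists (t delta : R) (c : Msg C) (p : AuthProof C),
    tr <= t /\ Rabs delta <= eps /\
    verifier_accepts C Dh Wmax hpk c (t + delta) p /\
    x = t - tr.

(* An accepted proof carries an epoch e whose heartbeat, since it cannot be
   forged, the parent signed at some time tp <= tr.  The freshness check bounds
   the verifier's epoch minus e by Wmax / Dh; passing from epochs back to
   times loses less than one interval Dh, so the verifier's clock reading is
   below tp + Wmax + Dh, and the true time differs from it by at most eps. *)

From Stdlib Require Import Reals ZArith Lra.
Open Scope R_scope.

Lemma floorR_sub_lt (x y : R) : x - y < IZR (floorR x - floorR y) + 1.
Proof.
  unfold floorR; rewrite minus_IZR.
  destruct (base_Int_part x) as [_ Hx], (base_Int_part y) as [Hy _].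
  lra.
Qed.

Lemma epoch_lag_le_time_lag (Dh W u v : R) :
  0 < Dh -> IZR (floorR (u / Dh) - floorR (v / Dh)) <= W / Dh -> u - v < W + Dh.
Proof.
  intros HDh Hlag.
  assert (Hgap : (u - v) / Dh < W / Dh + 1).
  { pose proof (floorR_sub_lt (u / Dh) (v / Dh)). unfold Rdiv in *. lra. }
  apply (Rmult_lt_compat_r Dh) in Hgap; [|exact HDh].
  replace (W + Dh) with ((W / Dh + 1) * Dh) by (field; lra).
  replace (u - v) with ((u - v) / Dh * Dh) by (field; lra).
  exact Hgap.
Qed.

Lemma accepted_epoch_signed (C : Crypto) (Dh Wmax tr tloc : R) (hpk : PK C)
    (c : Msg C) (p : AuthProof C) :
  no_heartbeat_forgery C hpk Dh tr ->
  verifier_accepts C Dh Wmax hpk c tloc p ->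
  signed_by_parent Dh tr (pf_epoch p).
Proof. intros Hnf (_ & Hsig & _). exact (Hnf _ _ Hsig). Qed.

Lemma accepted_clock_before (C : Crypto) (Dh Wmax tr tloc : R) (hpk : PK C)
    (c : Msg C) (p : AuthProof C) :
  0 < Dh -> no_heartbeat_forgery C hpk Dh tr ->
  verifier_accepts C Dh Wmax hpk c tloc p ->
  tloc < tr + Wmax + Dh.
Proof.
  intros HDh Hnf Hacc.
  destruct (accepted_epoch_signed _ _ _ _ _ _ _ _ Hnf Hacc) as (tp & Htp & Hep).
  destruct Hacc as [Hfresh _].
  rewrite <- Hep in Hfresh.
  pose proof (epoch_lag_le_time_lag _ _ _ _ HDh Hfresh).
  lra.
Qed.

Theorem theorem1 (C : Crypto) (Dh Wmax eps : R) (hpk : PK C) (tr : R) :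
  0 < Dh -> 0 < Wmax -> 0 <= eps ->
  no_heartbeat_forgery C hpk Dh tr ->
  is_upper_bound (zombie_times C Dh Wmax eps hpk tr) (Wmax + Dh + eps).
Proof.
  intros HDh _ _ Hnf x (t & delta & c & p & _ & Hdelta & Hacc & ->).
  pose proof (accepted_clock_before _ _ _ _ _ _ _ _ HDh Hnf Hacc).
  pose proof (Rle_abs (- delta)). rewrite Rabs_Ropp in *.
  lra.
Qed.
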